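(* Let $K$ be a real closed field. Then $h(K)\le d(K)$ (in particular $h(K)$ is defined).
   Context: A cut of a real closed field $F$ is a pair $C=(C^-,C^+)$ with $F=C^-\cup C^+$ disjoint and $C^-<C^+$; an element $a$ of an extension realizes $C$ if $C^-=\{c\in F:c<a\}$, $C^+=\{c\in F:c>a\}$. A set of cuts of $F$ is dependent if for every real closed field $L\supseteq F$ containing realizations $a_C$ of its members, $\{a_C\}$ is algebraically dependent over $F$; otherwise it is independent. The height $h(K)$ of a real closed field $K$ is the least ordinal $\alpha$ for which there is a continuous increasing sequence $(K_i:i\le\alpha)$ of real closed fields with $K_0$ countable, $K_\alpha=K$, and each $K_{i+1}$ the real closure of $K_i(S_i)$ for a set $S_i\subseteq K_{i+1}$ of realizations of an independent set of cuts of $K_i$. The depth $d(K)$ is the least regular cardinal $\kappa$ greater than the length of every strictly increasing (ordinal-indexed) sequence in $K$. *)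

(* real closed fields are rcfType; multivariate polynomials
   from multinomials' mpoly.  Ordinals/cardinals are represented by strict
   well-orders (T, R) compared via initial-segment embeddings. *)
From HB Require Import structures.
From mathcomp Require Import all_boot all_order all_algebra.
From mathcomp Require Import mpoly.
Set Implicit Arguments. Unset Strict Implicit. Unset Printing Implicit Defensive.
Import Order.TTheory GRing.Theory Num.Theory.
Local Open Scope ring_scope.

Definition strict_wellorder (T : Type) (R : T -> T -> Prop) : Prop :=
  [/\ forall x y z, R x y -> R y z -> R x z,
      forall x, ~ R x x,
      forall x y, [\/ R x y, x = y | R y x]
    & well_founded R].

Definition init_emb (A B : Type) (RA : A -> A -> Prop) (RB : B -> B -> Prop)
  (f : A -> B) : Prop :=
  (forall x y, RA x y -> RB (f x) (f y)) /\
  (forall a b, RB b (f a) -> exists a', f a' = b).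

Definition ord_le (A B : Type) (RA : A -> A -> Prop) (RB : B -> B -> Prop) :=
  exists f : A -> B, init_emb RA RB f.

Definition ord_lt (A B : Type) (RA : A -> A -> Prop) (RB : B -> B -> Prop) :=
  exists f : A -> B, init_emb RA RB f /\ exists b, forall a, f a <> b.

Definition sub_rel (T : Type) (R : T -> T -> Prop) (P : T -> Prop) :
  sig P -> sig P -> Prop := fun x y => R (proj1_sig x) (proj1_sig y).
Arguments sub_rel {T} R P _ _.

Definition is_cardinal (T : Type) (R : T -> T -> Prop) : Prop :=
  strict_wellorder R /\
  forall k : T, ~ exists f : sig (fun x => R x k) -> T,
      (forall x y, f x = f y -> x = y) /\ (forall t, exists x, f x = t).

Definition is_regular_cardinal (T : Type) (R : T -> T -> Prop) : Prop :=
  [/\ is_cardinal R,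
      (exists f : nat -> T, forall m n, f m = f n -> m = n)
    & forall X : T -> Prop, (forall k, exists2 x, X x & (R k x \/ k = x)) ->
        ord_le R (sub_rel R X)].

Section RCF.
Variable K : rcfType.

Definition bounds_increasing_seqs (T : Type) (R : T -> T -> Prop) : Prop :=
  forall (B : Type) (RB : B -> B -> Prop) (s : B -> K),
    strict_wellorder RB -> (forall x y, RB x y -> s x < s y) -> ord_lt RB R.

Definition is_depth (T : Type) (R : T -> T -> Prop) : Prop :=
  [/\ is_regular_cardinal R, bounds_increasing_seqs R
    & forall (T' : Type) (R' : T' -> T' -> Prop),
        is_regular_cardinal R' -> bounds_increasing_seqs R' -> ord_le R R'].

Definition subset_K (A B : K -> Prop) := forall x, A x -> B x.

Definition is_subfield (F : K -> Prop) : Prop :=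
  [/\ F 0, F 1,
      forall x y, F x -> F y -> F (x - y),
      forall x y, F x -> F y -> F (x * y)
    & forall x, F x -> x != 0 -> F x^-1].

Definition poly_over (F : K -> Prop) (p : {poly K}) : Prop :=
  forall i, F p`_i.

(* F (with the order induced from K) is real closed: the real closed
   axiom of MathComp's rcfType, relativized to F *)
Definition is_real_closed_subfield (F : K -> Prop) : Prop :=
  is_subfield F /\
  forall (p : {poly K}) (a b : K), poly_over F p -> F a -> F b ->
    a <= b -> p.[a] <= 0 <= p.[b] ->
    exists2 x, F x & (a <= x <= b) && root p x.

Definition gen_field (E : K -> Prop) : K -> Prop :=
  fun x => forall F, is_subfield F -> subset_K E F -> F x.

Definition algebraic_over (F : K -> Prop) (x : K) : Prop :=
  exists2 p : {poly K}, poly_over F p & p != 0 /\ root p x.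

Definition is_real_closure_of (L E : K -> Prop) : Prop :=
  [/\ is_real_closed_subfield L, subset_K E L
    & forall x, L x -> algebraic_over E x].

Definition cutT := ((K -> Prop) * (K -> Prop))%type.

Definition is_cut (F : K -> Prop) (C : cutT) : Prop :=
  [/\ forall x, F x <-> (C.1 x \/ C.2 x),
      forall x, ~ (C.1 x /\ C.2 x)
    & forall x y, C.1 x -> C.2 y -> x < y].

Definition ofield_emb (F : K -> Prop) (L : rcfType) (phi : K -> L) : Prop :=
  [/\ phi 1 = 1,
      forall x y, F x -> F y -> phi (x + y) = phi x + phi y,
      forall x y, F x -> F y -> phi (x * y) = phi x * phi y
    & forall x y, F x -> F y -> x < y -> phi x < phi y].

Definition realizes_in (F : K -> Prop) (L : rcfType) (phi : K -> L)
  (C : cutT) (a : L) : Prop :=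
  (forall c, C.1 c <-> (F c /\ phi c < a)) /\
  (forall c, C.2 c <-> (F c /\ a < phi c)).

Definition alg_dependent (F : K -> Prop) (L : rcfType) (phi : K -> L)
  (Cs : cutT -> Prop) (a : cutT -> L) : Prop :=
  exists (n : nat) (cs : 'I_n -> cutT),
    (forall i, Cs (cs i)) /\ (forall i j, cs i = cs j -> i = j) /\
    exists p : {mpoly K[n]},
      [/\ p != 0, (forall m, F p@_m) & mmap phi (fun i => a (cs i)) p = 0].

Definition cuts_dependent (F : K -> Prop) (Cs : cutT -> Prop) : Prop :=
  forall (L : rcfType) (phi : K -> L), ofield_emb F phi ->
    forall a : cutT -> L, (forall C, Cs C -> realizes_in F phi C (a C)) ->
      alg_dependent F phi Cs a.

Definition cuts_independent (F : K -> Prop) (Cs : cutT -> Prop) : Prop :=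
  (forall C, Cs C -> is_cut F C) /\ ~ cuts_dependent F Cs.

Definition realizes (F : K -> Prop) (C : cutT) (x : K) : Prop :=
  (forall c, C.1 c <-> (F c /\ c < x)) /\ (forall c, C.2 c <-> (F c /\ x < c)).

Definition realizes_indep_cuts (F S : K -> Prop) : Prop :=
  exists Cs : cutT -> Prop,
  [/\ cuts_independent F Cs,
      forall s, S s -> exists2 C, Cs C & realizes F C s,
      forall C, Cs C -> exists2 s, S s & realizes F C s
    & forall C s s', Cs C -> S s -> S s' -> realizes F C s -> realizes F C s' ->
        s = s'].

(* (Kc i : i <= alpha) indexed by a well-order (I,R) with greatest element
   top (so alpha is the order type of {i | R i top}), with sets S_i, is a
   continuous increasing sequence of real closed subfields witnessing that
   the height of K is at most alpha *)
Definition height_chain (I : Type) (R : I -> I -> Prop) (top : I)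
  (Kc S : I -> K -> Prop) : Prop :=
  [/\ strict_wellorder R,
      (forall i, R i top \/ i = top),
      (forall i, is_real_closed_subfield (Kc i)),
      (forall i j, R i j -> subset_K (Kc i) (Kc j))
    & [/\
      (forall i0, (forall j, ~ R j i0) ->
        exists g : K -> nat, forall x y, Kc i0 x -> Kc i0 y -> g x = g y -> x = y),
      (forall i, (exists j, R j i) -> (forall j, R j i -> exists2 k, R j k & R k i) ->
        forall x, Kc i x <-> exists2 j, R j i & Kc j x),
      (forall i j, R i j -> (forall k, ~ (R i k /\ R k j)) ->
        [/\ subset_K (S i) (Kc j), realizes_indep_cuts (Kc i) (S i)
          & is_real_closure_of (Kc j) (gen_field (fun x => Kc i x \/ S i x))])
    & (forall x, Kc top x)]].

End RCF.

From HB Require Import structures.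
From mathcomp Require Import all_boot all_order all_algebra.
From mathcomp Require Import mpoly.
From mathcomp Require Import boolp wochoice.
From mathcomp Require classical_sets.
From mathcomp Require Import polyrcf.
From mathcomp Require Import fingroup perm.
Set Implicit Arguments. Unset Strict Implicit. Unset Printing Implicit Defensive.
Import Order.TTheory GRing.Theory Num.Theory.

(* The depth exists: the Hartogs number of a set absorbing pairs (finite trees
   over K) is a regular cardinal longer than every increasing sequence of K, and
   among the well-orders with these two isomorphism-invariant properties there is
   a least one.

   Let kappa = d(K) and build K_i (i < kappa) by transfinite recursion: K_0 is the
   field of real algebraic numbers, unions are taken at limits, and K_(i+1) is the
   real closure of K_i(S_i), where S_i is a maximal algebraically independent set
   (Zorn) whose elements realize pairwise distinct cuts of K_i.  By maximality,
   every x outside K_(i+1) has a witness s_i in S_i realizing the same cut of K_i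
   as x.  If x were in no K_i, the s_i would approach x monotonically from one
   side along a cofinal set of indices, giving a monotone sequence of length
   kappa in K, which the definition of d(K) forbids.  So the K_i exhaust K. *)

(** * Well-orders *)

Lemma sig_inj (A : Type) (P : A -> Prop) (x y : sig P) :
  proj1_sig x = proj1_sig y -> x = y.
Proof. by apply: eq_sig_hprop => a p q; apply: Prop_irrelevance. Qed.

Section StrictWellOrder.
Variables (A : Type) (R : A -> A -> Prop).
Hypothesis wo : strict_wellorder R.

Lemma swo_trans x y z : R x y -> R y z -> R x z.
Proof. by case: wo => h _ _ _; apply: h. Qed.

Lemma swo_irr x : ~ R x x.
Proof. by case: wo => _ h _ _; apply: h. Qed.

Lemma swo_total x y : [\/ R x y, x = y | R y x].
Proof. by case: wo => _ _ h _; apply: h. Qed.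

Lemma swo_wf : well_founded R.
Proof. by case: wo. Qed.

Lemma swo_asym x y : R x y -> ~ R y x.
Proof. by move=> xy yx; apply: (@swo_irr x); apply: swo_trans yx. Qed.

Lemma swo_min (P : A -> Prop) : (exists x, P x) ->
  exists x, P x /\ forall y, P y -> ~ R y x.
Proof.
move=> [x Px]; apply: contrapT => nomin.
suff : forall z, Acc R z -> ~ P z by move/(_ x (swo_wf x)).
move=> z; elim => {}z _ ih Pz; apply: nomin; exists z; split => // y Py yz.
exact: ih yz Py.
Qed.

Lemma swo_mono_not_below (f : A -> A) : (forall x y, R x y -> R (f x) (f y)) ->
  forall x, ~ R (f x) x.
Proof.
move=> mono x; elim: (swo_wf x) => {}x _ ih fxx.
exact: ih _ fxx (mono _ _ fxx).
Qed.

Lemma ord_lt_irr : ~ ord_lt R R.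
Proof.
case=> f [[mono init] [b nb]].
case: (swo_total b (f b)) => [bfb|fbb|fbb].
- by have [a' e] := init b b bfb; apply: (nb a').
- by apply: (nb b); rewrite -fbb.
- exact: swo_mono_not_below mono _ fbb.
Qed.

Lemma sub_rel_wo (P : A -> Prop) : strict_wellorder (sub_rel R P).
Proof.
split.
- by move=> x y z; apply: swo_trans.
- by move=> x; apply: swo_irr.
- move=> x y; case: (swo_total (proj1_sig x) (proj1_sig y)) => [h|e|h].
  + by constructor 1.
  + by constructor 2; apply: sig_inj.
  + by constructor 3.
- have acc a : Acc R a -> forall pa : P a, Acc (sub_rel R P) (exist P a pa).
    by elim => {}a _ ih pa; constructor => -[b pb] ba; apply: ih.
  by move=> [a pa]; apply: acc; apply: swo_wf.
Qed.

Definition least (P : A -> Prop) : option A :=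
  match pselect (exists x, P x /\ forall y, P y -> ~ R y x) with
  | left h => Some (projT1 (cid h))
  | right _ => None
  end.

Lemma leastP (P : A -> Prop) :
  match least P with
  | Some x => P x /\ forall y, P y -> ~ R y x
  | None => forall x, ~ P x
  end.
Proof.
rewrite /least; case: pselect => [h|h]; first by case: (cid h).
by move=> x Px; apply: h; apply: swo_min; exists x.
Qed.

End StrictWellOrder.

Lemma swo_mono_inj (A B : Type) (RA : A -> A -> Prop) (RB : B -> B -> Prop)
    (e : A -> B) :
  strict_wellorder RA -> (forall y, ~ RB y y) ->
  (forall x y, RA x y -> RB (e x) (e y)) -> injective e.
Proof.
move=> wA irrB mono x y exy; case: (swo_total wA x y) => [h|//|h].
- by move: (mono _ _ h); rewrite exy => /irrB.
- by move: (mono _ _ h); rewrite exy => /irrB.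
Qed.

Definition cofinal (T : Type) (R : T -> T -> Prop) (C : T -> Prop) :=
  forall k, exists2 x, C x & (R k x \/ k = x).

Lemma cofinalVcompl (T : Type) (R : T -> T -> Prop) (P : T -> Prop) :
  strict_wellorder R -> cofinal R P \/ cofinal R (fun i => ~ P i).
Proof.
move=> wR; case: (pselect (cofinal R P)) => [|notcof]; [by left|right => k].
have [k0 nk0] : exists k0, ~ exists2 y, P y & (R k0 y \/ k0 = y).
  by apply: contrapT => h; apply: notcof => k1; apply: contrapT => nk1; apply: h; exists k1.
have notP m : R k0 m \/ k0 = m -> ~ P m by move=> km Pm; apply: nk0; exists m.
case: (swo_total wR k k0) => [kk0|->|k0k].
- by exists k0; [apply: notP; right|left].
- by exists k0; [apply: notP; right|right].
- by exists k; [apply: notP; left|right].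
Qed.

Lemma well_order_swo (T : eqType) (R : rel T) :
  well_order R -> strict_wellorder (fun x y => ~~ R y x).
Proof.
move=> wo.
have wch : wo_chain R predT by move=> A _; apply: wo.
have Rtot x y : R x y || R y x by exact: (wo_chainW wch).
have Ranti x y : R x y -> R y x -> x = y.
  by move=> xy yx; apply: wo_chain_antisymmetric wch _ _ _ _ _; rewrite ?xy.
have Rmin (A : {pred T}) a : a \in A -> exists2 z, z \in A & {in A, forall y, R z y}.
  by move=> aA; have [z [[zA lb] _]] := wo A (ex_intro _ a aA); exists z.
split.
- move=> x y z /negP nyx /negP nzy; apply/negP => zx.
  have [m] := Rmin (mem [:: x; y; z]) x (mem_head _ _).
  rewrite !inE => /or3P[] /eqP -> lb.
  + have ezx : z = x by apply: Ranti _ _ zx _; apply: lb; rewrite !inE eqxx !orbT.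
    by case/orP: (Rtot x y) => [xy|//]; apply: nzy; rewrite ezx.
  + by apply: nyx; apply: lb; rewrite !inE eqxx.
  + by apply: nzy; apply: lb; rewrite !inE eqxx orbT.
- by move=> x; rewrite (wo_chain_reflexive wch).
- move=> x y; case Rxy: (R x y); case Ryx: (R y x).
  + by constructor 2; apply: Ranti.
  + by constructor 1.
  + by constructor 3.
  + by move: (Rtot x y); rewrite Rxy Ryx.
- move=> a; apply: contrapT => na.
  pose Bad := [pred w | `[< ~ Acc (fun x y => ~~ R y x) w >]].
  have [m] := Rmin Bad a (asboolT na); rewrite inE => /asboolP mBad lb.
  apply: mBad; constructor => y /negP nmy.
  apply: contrapT => ny; apply: nmy; apply: lb; rewrite inE; exact/asboolP.
Qed.

Section Comparison.
Variables (A B : Type) (RA : A -> A -> Prop) (RB : B -> B -> Prop).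
Hypotheses (wA : strict_wellorder RA) (wB : strict_wellorder RB).

(* [matching a] is the least element of [B] not matched by any [a' < a], if any. *)
Let matching : A -> option B :=
  Fix (swo_wf wA) (fun _ => option B) (fun a rec =>
    least RB (fun b => ~ exists a' (h : RA a' a), rec a' h = Some b)).

Let matched_below a b := exists2 a', RA a' a & matching a' = Some b.

Let matchingE a : matching a = least RB (fun b => ~ matched_below a b).
Proof.
rewrite /matching Fix_eq; last first.
  move=> x f g fg; congr (least RB _); apply: funext => b; apply: propext.
  by split => h [a' [h1 h2]]; apply: h; exists a', h1; rewrite ?fg // -fg.
congr (least RB _); apply: funext => b; apply: propext; split.
  by move=> h [a' h1 h2]; apply: h; exists a', h1.
by move=> h [a' [h1 h2]]; apply: h; exists a'.
Qed.

Let matching_down_closed a b y : matching a = Some b -> RB y b -> matched_below a y.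
Proof.
rewrite matchingE; have := leastP wB (fun b => ~ matched_below a b).
case: least => // b' [_ bmin] [<-] yb.
by apply: contrapT => ny; apply: bmin ny yb.
Qed.

Let matching_mono a' a b : RA a' a -> matching a = Some b ->
  exists2 b', matching a' = Some b' & RB b' b.
Proof.
move=> a'a fa; have := fa; rewrite matchingE.
have := leastP wB (fun b => ~ matched_below a b); case: least => // b1 [nb _] [e1].
rewrite e1 in nb.
case e : (matching a') => [b'|].
  exists b' => //; case: (swo_total wB b' b) => [//|eb|bb'].
    by case: nb; exists a' => //; rewrite e eb.
  have [a'' h1 h2] := matching_down_closed e bb'.
  by case: nb; exists a'' => //; exact: (swo_trans wA h1 a'a).
move: e; rewrite matchingE.
have := leastP wB (fun b => ~ matched_below a' b); case: least => // hall _.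
have [a'' h1 h2] := contrapT (hall b).
by case: nb; exists a'' => //; exact: (swo_trans wA h1 a'a).
Qed.

Let matching_inj a1 a2 b : matching a1 = Some b -> matching a2 = Some b -> a1 = a2.
Proof.
move=> e1 e2; case: (swo_total wA a1 a2) => [h|//|h].
- have [b' e b'b] := matching_mono h e2.
  by move: b'b; rewrite e1 in e; case: e => ->; move/(swo_irr wB).
- have [b' e b'b] := matching_mono h e1.
  by move: b'b; rewrite e2 in e; case: e => ->; move/(swo_irr wB).
Qed.

Lemma ord_le_or_lt : ord_le RA RB \/ ord_lt RB RA.
Proof.
case: (pselect (exists a, matching a = None)) => [hN|hS]; last first.
  left.
  have defd a : exists b, matching a = Some b.
    case e : (matching a) => [b|]; first by exists b.
    by case: hS; exists a.
  pose g a := sval (cid (defd a)).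
  have gP a : matching a = Some (g a) by rewrite /g; case: cid.
  exists g; split.
    move=> x y xy; have [b' e b'b] := matching_mono xy (gP y).
    by rewrite gP in e; case: e => ->.
  move=> a b ba; have [a' _ e] := matching_down_closed (gP a) ba.
  by exists a'; apply: Some_inj; rewrite -gP.
right; have [a0 [fa0 a0min]] := swo_min wA hN.
have defd a : RA a a0 -> exists b, matching a = Some b.
  move=> aa0; case e : (matching a) => [b|]; first by exists b.
  by case: (a0min a e aa0).
have allm b : matched_below a0 b.
  move: fa0; rewrite matchingE.
  have := leastP wB (fun b => ~ matched_below a0 b); case: least => // hall _.
  exact: contrapT (hall b).
pose h b := projT1 (cid2 (allm b)).
have hP b : RA (h b) a0 /\ matching (h b) = Some b.
  by rewrite /h; case: cid2.
exists h; split; last first.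
  by exists a0 => b e; have := (hP b).1; rewrite e; apply: swo_irr.
split.
  move=> b1 b2 bb; case: (swo_total wA (h b1) (h b2)) => [//|e|lt].
    have := (hP b1).2; rewrite e (hP b2).2 => -[eb].
    by rewrite eb in bb; case: (swo_irr wB bb).
  have [b' e b'b] := matching_mono lt (hP b1).2.
  rewrite (hP b2).2 in e; case: e => e; rewrite -e in b'b.
  by case: (swo_asym wB bb b'b).
move=> b x xh.
have [b' eb'] := defd x (swo_trans wA xh (hP b).1).
by exists b'; apply: matching_inj (hP b').2 eb'.
Qed.

End Comparison.

Definition ord_iso (A B : Type) (RA : A -> A -> Prop) (RB : B -> B -> Prop) :=
  exists (f : A -> B) (g : B -> A),
    [/\ cancel f g, cancel g f & forall x y, RA x y <-> RB (f x) (f y)].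

Lemma ord_iso_trans (A B C : Type) (RA : A -> A -> Prop) (RB : B -> B -> Prop)
    (RC : C -> C -> Prop) :
  ord_iso RA RB -> ord_iso RB RC -> ord_iso RA RC.
Proof.
case=> f [g [fK gK fR]] [f' [g' [fK' gK' fR']]].
exists (f' \o f), (g \o g'); split.
- by move=> a /=; rewrite fK' fK.
- by move=> c /=; rewrite gK gK'.
- by move=> x y; rewrite fR fR'.
Qed.

Lemma ord_iso_le (A B : Type) (RA : A -> A -> Prop) (RB : B -> B -> Prop) :
  ord_iso RA RB -> ord_le RB RA.
Proof.
case=> f [g [fK gK fR]]; exists g; split; last by move=> b a _; exists (f a).
by move=> x y; rewrite -[x]gK -[y]gK -fR !fK.
Qed.

Section IsoTransfer.
Variables (A B : Type) (RA : A -> A -> Prop) (RB : B -> B -> Prop).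
Hypotheses (wA : strict_wellorder RA) (iAB : ord_iso RA RB).

Lemma ord_iso_wo : strict_wellorder RB.
Proof.
case: iAB => f [g [fK gK fR]]; split.
- by move=> x y z; rewrite -[x]gK -[y]gK -[z]gK -!fR; apply: swo_trans.
- by move=> x; rewrite -[x]gK -fR; apply: swo_irr.
- move=> x y; case: (swo_total wA (g x) (g y)) => [e|e|e].
  + by constructor 1; rewrite -[x]gK -[y]gK -fR.
  + by constructor 2; rewrite -[x]gK -[y]gK e.
  + by constructor 3; rewrite -[x]gK -[y]gK -fR.
- have acc a : Acc RA a -> Acc RB (f a).
    by elim => {}a _ ih; constructor => b; rewrite -[b]gK -fR => /ih.
  by move=> b; rewrite -[b]gK; apply/acc/(swo_wf wA).
Qed.

Lemma ord_iso_cardinal : is_cardinal RA -> is_cardinal RB.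
Proof.
move=> [_ cA]; split; first exact: ord_iso_wo.
case: iAB => f [g [fK gK fR]] k [F [Finj Fsurj]]; apply: (cA (g k)).
have below (x : {a | RA a (g k)}) : RB (f (sval x)) k.
  by case: x => a ha; rewrite /= -[k]gK -fR.
exists (fun x => g (F (exist (fun b => RB b k) _ (below x)))); split.
  move=> x y /(can_inj gK) /Finj /(congr1 (@proj1_sig _ _)) /= /(can_inj fK).
  exact: sig_inj.
move=> a; have [[y hy] e] := Fsurj (f a).
have gy : RA (g y) (g k) by rewrite fR !gK.
exists (exist _ (g y) gy); rewrite /=.
by rewrite (_ : exist _ _ _ = exist _ y hy) ?e ?fK //; apply: sig_inj; rewrite /= gK.
Qed.

Lemma ord_iso_bounds (K : rcfType) :
  bounds_increasing_seqs K RA -> bounds_increasing_seqs K RB.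
Proof.
case: iAB => f [g [fK gK fR]] bA C RC s wC incr.
have [e [[mono init] [m nm]]] := bA C RC s wC incr.
exists (f \o e); split; last by exists (f m) => c /(can_inj fK); apply: nm.
split; first by move=> x y xy; rewrite -fR; apply: mono.
move=> c y; rewrite -[y]gK -fR => /init [c' e'].
by exists c'; rewrite /= e'.
Qed.

Lemma ord_iso_regular : is_regular_cardinal RA -> is_regular_cardinal RB.
Proof.
move=> [cA [fn fninj] cofA]; split; first exact: ord_iso_cardinal.
  case: iAB => f [g [fK gK fR]]; exists (f \o fn).
  by move=> m n /(can_inj fK) /fninj.
case: iAB => f [g [fK gK fR]] Xb cofB.
pose Xa a := Xb (f a).
have cofXa : cofinal RA Xa.
  move=> k; have [x Xx hx] := cofB (f k); exists (g x); first by rewrite /Xa gK.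
  by case: hx => [hx|<-]; [left; rewrite fR gK|right; rewrite fK].
have [e [mono init]] := cofA Xa cofXa.
pose e' b := exist Xb (f (sval (e (g b)))) (svalP (e (g b))).
exists e'; split.
  by move=> x y xy; rewrite /sub_rel /= -fR; apply: mono; rewrite /sub_rel fR !gK.
move=> b [y Xy]; rewrite /sub_rel /= => yb.
have gyb : RA (g y) (sval (e (g b))) by rewrite fR gK.
have Xgy : Xa (g y) by rewrite /Xa gK.
have [a' ea'] := init (g b) (exist Xa (g y) Xgy) gyb.
by exists (f a'); apply: sig_inj; rewrite /= fK ea' /= gK.
Qed.

End IsoTransfer.

Definition initial_seg (A : Type) (R : A -> A -> Prop) (m : A) :=
  sub_rel R (fun y => R y m).
Arguments initial_seg {A} R m _ _.

Lemma initial_seg_wo (A : Type) (R : A -> A -> Prop) (m : A) :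
  strict_wellorder R -> strict_wellorder (initial_seg R m).
Proof. by move=> wR; apply: sub_rel_wo. Qed.
Arguments initial_seg_wo {A R} m.

Lemma ord_lt_iso_seg (A B : Type) (RA : A -> A -> Prop) (RB : B -> B -> Prop) :
  strict_wellorder RA -> strict_wellorder RB -> ord_lt RA RB ->
  exists m : B, ord_iso RA (initial_seg RB m).
Proof.
move=> wA wB [e [[mono init] missed]].
have [m [nm mmin]] := swo_min wB missed.
have below a : RB (e a) m.
  case: (swo_total wB (e a) m) => [//|ea|me]; first by case: (nm a).
  by have [a' ea'] := init a m me; case: (nm a').
have onto y : RB y m -> exists a, e a = y.
  by move=> ym; apply: contrapT => hy; apply: (mmin y) => // a ea; apply: hy; exists a.
pose g (y : {y | RB y m}) := projT1 (cid (onto _ (svalP y))).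
have gP y : e (g y) = sval y by rewrite /g; case: cid.
exists m, (fun a => exist (fun y => RB y m) (e a) (below a)), g; split.
- by move=> a; apply: (swo_mono_inj wA (swo_irr wB) mono); rewrite gP.
- by move=> y; apply: sig_inj; rewrite /= gP.
- move=> x y; rewrite /sub_rel /=; split; first exact: mono.
  move=> h; case: (swo_total wA x y) => [//|exy|yx].
    by rewrite exy in h; case: (swo_irr wB h).
  by case: (swo_asym wB h (mono _ _ yx)).
Qed.

Lemma initial_seg_nested (A : Type) (R : A -> A -> Prop) (c : A) (m : {y | R y c}) :
  strict_wellorder R ->
  ord_iso (initial_seg (initial_seg R c) m) (initial_seg R (sval m)).
Proof.
move=> wR; have mc := svalP m.
have yc (y : {y | R y (sval m)}) : R (sval y) c by exact: (swo_trans wR (svalP y) mc).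
exists (fun y => exist (fun w => R w (sval m)) (sval (sval y)) (svalP y)).
exists (fun y => exist (fun y => initial_seg R c y m) (exist _ (sval y) (yc y)) (svalP y)).
split.
- by move=> y; apply/sig_inj/sig_inj.
- by move=> y; apply: sig_inj.
- by move=> x y; split.
Qed.

Definition with_top (A : Type) (R : A -> A -> Prop) (a b : option A) : Prop :=
  match a, b with
  | Some x, Some y => R x y
  | Some _, None => True
  | None, _ => False
  end.

Lemma with_top_wo (A : Type) (R : A -> A -> Prop) :
  strict_wellorder R -> strict_wellorder (with_top R).
Proof.
move=> wA; split.
- by move=> [x|] [y|] [z|] //=; apply: swo_trans.
- by move=> [x|] //=; apply: swo_irr.
- move=> [x|] [y|] /=.
  + by case: (swo_total wA x y) => [h|->|h]; [constructor 1|constructor 2|constructor 3].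
  + by constructor 1.
  + by constructor 3.
  + by constructor 2.
- have accS x : Acc (with_top R) (Some x).
    elim: (swo_wf wA x) => {}x _ ih.
    by constructor => -[y|] yx; [apply: ih|].
  move=> [x|]; first exact: accS.
  by constructor => -[y|] yx; [apply: accS|].
Qed.

Lemma with_top_iso (A : Type) (R : A -> A -> Prop) :
  ord_iso R (initial_seg (with_top R) None).
Proof.
exists (fun a => exist (fun w => with_top R w None) (Some a) I).
exists (fun w => match w with exist (Some a) _ => a | exist None f => False_rect A f end).
split.
- by [].
- by case=> -[a|[]] h; apply: sig_inj.
- by move=> x y; split.
Qed.

Section LeastWellOrder.
Variable P : forall T : Type, (T -> T -> Prop) -> Prop.
Hypothesis P_iso : forall (A B : Type) (RA : A -> A -> Prop) (RB : B -> B -> Prop),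
  strict_wellorder RA -> ord_iso RA RB -> P RA -> P RB.

Lemma least_wo_with (A : Type) (RA : A -> A -> Prop) :
  strict_wellorder RA -> P RA ->
  exists (B : Type) (RB : B -> B -> Prop), [/\ strict_wellorder RB, P RB &
    forall (C : Type) (RC : C -> C -> Prop),
      strict_wellorder RC -> P RC -> ord_le RB RC].
Proof.
move=> wA PA; have wT := with_top_wo wA.
have [d [Pd dmin]] : exists d, P (initial_seg (with_top RA) d) /\
    forall d', P (initial_seg (with_top RA) d') -> ~ with_top RA d' d.
  by apply: (swo_min wT); exists None; apply: P_iso wA (with_top_iso RA) PA.
exists {w | with_top RA w d}, (initial_seg (with_top RA) d).
split; [exact: initial_seg_wo|exact: Pd|].
move=> C RC wC PC; case: (ord_le_or_lt (initial_seg_wo d wT) wC) => // lt.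
have [m Cm] := ord_lt_iso_seg wC (initial_seg_wo d wT) lt.
exfalso; apply: (dmin (sval m) _ (svalP m)).
exact: P_iso wC (ord_iso_trans Cm (initial_seg_nested m wT)) PC.
Qed.

End LeastWellOrder.

(** * Hartogs numbers and the existence of the depth *)

Definition injects (A B : Type) := exists f : A -> B, injective f.

Lemma cantor (X : Type) : ~ injects (X -> Prop) X.
Proof.
case=> f finj; pose D x := exists A, f A = x /\ ~ A x.
have DfD : ~ D (f D).
  by case=> A [fAD]; rewrite (finj _ _ fAD) => nDfD; apply: (nDfD); exists D.
by apply: (DfD); exists D.
Qed.

Lemma injects_ord_lt (X A B : Type) (RA : A -> A -> Prop) (RB : B -> B -> Prop) :
  strict_wellorder RA -> strict_wellorder RB ->
  injects A X -> ~ injects B X -> ord_lt RA RB.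
Proof.
move=> wA wB [j jinj] B_noinj; case: (ord_le_or_lt wB wA) => [[e [mono _]]|//].
exfalso; apply: B_noinj; exists (j \o e) => x y /jinj.
exact: (swo_mono_inj wB (swo_irr wA) mono).
Qed.

Section Hartogs.
Variables (X : Type) (code : option (X * X) -> X).
Hypothesis code_inj : injective code.
Variables (T : Type) (R : T -> T -> Prop).
Hypotheses (wR : strict_wellorder R) (T_noinj : ~ injects T X).
Hypothesis seg_inj : forall k, injects {x | R x k} X.

Lemma hartogs_closed_seg_inj x : exists f : T -> X, forall y1 y2,
  (R y1 x \/ y1 = x) -> (R y2 x \/ y2 = x) -> f y1 = f y2 -> y1 = y2.
Proof.
have [h hinj] := seg_inj x.
pose f z := if pselect (R z x) is left zx then Some (h (exist _ z zx)) else None.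
have fin z (zx : R z x) : f z = Some (h (exist _ z zx)).
  by rewrite /f; case: pselect => // zx'; rewrite (Prop_irrelevance zx' zx).
have fout z : ~ R z x -> f z = None by rewrite /f; case: pselect.
exists (fun z => code (omap (fun a => (a, a)) (f z))) => y1 y2 y1x y2x /code_inj.
case: (pselect (R y1 x)) => [h1|h1]; case: (pselect (R y2 x)) => [h2|h2].
- by rewrite (fin _ h1) (fin _ h2) => -[] /hinj /(congr1 (@proj1_sig _ _)).
- by rewrite (fin _ h1) (fout _ h2).
- by rewrite (fout _ h1) (fin _ h2).
- by case: y1x y2x => [//|->] [//|->].
Qed.

Lemma hartogs_no_max y : exists z, R y z.
Proof.
apply: contrapT => ymax; apply: T_noinj.
have [f finj] := hartogs_closed_seg_inj y.
have below z : R z y \/ z = y.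
  by case: (swo_total wR z y) => [|->|yz]; [left|right|case: ymax; exists z].
by exists f => z1 z2; apply: finj.
Qed.

Lemma hartogs_infinite : exists f : nat -> T, injective f.
Proof.
have [y0 _] : exists y : T, True.
  apply: contrapT => T0; apply: T_noinj.
  by exists (fun _ => code None) => x; case: T0; exists x.
pose succ y := sval (cid (hartogs_no_max y)).
have succP y : R y (succ y) by rewrite /succ; case: cid.
pose f := fix f n := if n is n'.+1 then succ (f n') else y0.
have mono m n : (m < n)%N -> R (f m) (f n).
  elim: n => [//|n ih]; rewrite ltnS leq_eqVlt => /orP[/eqP ->|/ih mn].
    exact: succP.
  exact: (swo_trans wR mn (succP _)).
exists f => m n fmn; case: (ltngtP m n) => // mn.
- by have := mono _ _ mn; rewrite fmn => /(swo_irr wR).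
- by have := mono _ _ mn; rewrite fmn => /(swo_irr wR).
Qed.

Lemma hartogs_cardinal : is_cardinal R.
Proof.
split=> // k [F [_ Fsurj]]; apply: T_noinj.
pose G y := sval (cid (Fsurj y)).
have GK : cancel G F by move=> y; rewrite /G; case: cid.
have [h hinj] := seg_inj k.
by exists (h \o G) => x y /hinj /(can_inj GK).
Qed.

Lemma hartogs_cofinal (C : T -> Prop) : cofinal R C -> ord_le R (sub_rel R C).
Proof.
move=> cof; have wC := sub_rel_wo wR C.
case: (ord_le_or_lt wR wC) => [//|lt]; exfalso; apply: T_noinj.
have [m [f [g [fK _ _]]]] := ord_lt_iso_seg wC wR lt.
have [h hinj] := seg_inj m.
pose up y := sval (cid2 (cof y)).
have upC y : C (up y) by rewrite /up; case: cid2.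
have upR y : R y (up y) \/ y = up y by rewrite /up; case: cid2.
pose seg_code x := sval (cid (hartogs_closed_seg_inj x)).
have seg_codeP x : forall y1 y2, (R y1 x \/ y1 = x) -> (R y2 x \/ y2 = x) ->
    seg_code x y1 = seg_code x y2 -> y1 = y2.
  by rewrite /seg_code; case: cid.
exists (fun y => code (Some (h (f (exist C (up y) (upC y))), seg_code (up y) y))).
move=> y1 y2 /code_inj [/hinj /(can_inj fK) /(congr1 (@proj1_sig _ _)) /= e12].
by rewrite -e12; apply: seg_codeP; [exact: upR|rewrite e12; exact: upR].
Qed.

Lemma hartogs_regular : is_regular_cardinal R.
Proof.
split; [exact: hartogs_cardinal|exact: hartogs_infinite|exact: hartogs_cofinal].
Qed.

End Hartogs.

Lemma hartogs_exists (X : Type) : exists (T : Type) (R : T -> T -> Prop),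
  [/\ strict_wellorder R, ~ injects T X & forall k, injects {x | R x k} X].
Proof.
have [WP WPwo] := well_ordering_principle (X -> Prop).
have wP := with_top_wo (well_order_swo WPwo).
set R := with_top _ in wP.
have [c [c_noinj c_min]] : exists c, ~ injects {w | R w c} X /\
    forall d, ~ injects {w | R w d} X -> ~ R d c.
  apply: (swo_min wP); exists None => -[g ginj]; apply: (@cantor X).
  exists (fun A => g (exist (fun w => R w None) (Some A) I)).
  by move=> A B /ginj /(congr1 (@proj1_sig _ _)) [].
exists {w | R w c}, (initial_seg R c); split.
- exact: initial_seg_wo.
- exact: c_noinj.
- move=> k; have [g ginj] : injects {w | R w (sval k)} X.
    by apply: contrapT => nk; apply: c_min nk (svalP k).
  have [f [f' [fK _ _]]] := initial_seg_nested k wP.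
  by exists (g \o f) => x y /ginj /(can_inj fK).
Qed.

Local Open Scope ring_scope.

Definition tree_code (X : Type) (o : option (GenTree.tree X * GenTree.tree X)) :=
  if o is Some (a, b) then GenTree.Node 0 [:: a; b] else GenTree.Node 1 [::].

Lemma tree_code_inj (X : Type) : injective (@tree_code X).
Proof. by move=> [[a b]|] [[c d]|] //= [-> ->]. Qed.

Lemma depth_exists (K : rcfType) : exists (T : Type) (Rk : T -> T -> Prop), is_depth K Rk.
Proof.
have [T [R [wR noinj seginj]]] := hartogs_exists (GenTree.tree K).
have bndR : bounds_increasing_seqs K R.
  move=> B RB s wB incr; apply: (injects_ord_lt wB wR _ noinj).
  exists (@GenTree.Leaf K \o s) => x y [] sxy.
  by apply: (swo_mono_inj (RB := <%R) wB _ incr sxy) => z; rewrite ltxx.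
pose P T (R : T -> T -> Prop) := is_regular_cardinal R /\ bounds_increasing_seqs K R.
have P_iso A B (RA : A -> A -> Prop) (RB : B -> B -> Prop) :
    strict_wellorder RA -> ord_iso RA RB -> P _ RA -> P _ RB.
  by move=> wA iAB [regA bndA]; split; [exact: ord_iso_regular regA|exact: ord_iso_bounds bndA].
have PR : P _ R by split=> //; exact: (hartogs_regular (@tree_code_inj K) wR noinj seginj).
have [B [RB [wB [regB bndB] leastB]]] := least_wo_with P_iso wR PR.
exists B, RB; split => // T' R' regR' bndR'.
by apply: leastB; [case: regR' => -[]|split].
Qed.

(** * Subfields and relative algebraic closures *)

Section Subfield.
Variables (K : rcfType) (F : K -> Prop).
Hypothesis hF : is_subfield F.

Lemma subfield0 : F 0. Proof. by case: hF. Qed.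
Lemma subfield1 : F 1. Proof. by case: hF. Qed.
Lemma subfieldB x y : F x -> F y -> F (x - y). Proof. by case: hF => _ _ + _ _; apply. Qed.
Lemma subfieldM x y : F x -> F y -> F (x * y). Proof. by case: hF => _ _ _ + _; apply. Qed.
Lemma subfieldN x : F x -> F (- x).
Proof. by move=> Fx; rewrite -sub0r; apply: subfieldB => //; apply: subfield0. Qed.
Lemma subfieldD x y : F x -> F y -> F (x + y).
Proof. by move=> Fx Fy; rewrite -[y]opprK; apply/subfieldB/subfieldN. Qed.
Lemma subfieldX x k : F x -> F (x ^+ k).
Proof.
by move=> Fx; elim: k => [|k ih]; rewrite ?expr0 ?exprS; [apply: subfield1|apply: subfieldM].
Qed.
Lemma subfield_nat k : F k%:R.
Proof. by elim: k => [|k ih]; rewrite ?mulrS; [apply: subfield0|apply/subfieldD/ih/subfield1]. Qed.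
Lemma subfield_sum I (r : seq I) (P : pred I) (f : I -> K) :
  (forall i, P i -> F (f i)) -> F (\sum_(i <- r | P i) f i).
Proof. by move=> Ff; apply: (big_ind F subfield0 subfieldD). Qed.
Lemma subfield_prod I (r : seq I) (P : pred I) (f : I -> K) :
  (forall i, P i -> F (f i)) -> F (\prod_(i <- r | P i) f i).
Proof. by move=> Ff; apply: (big_ind F subfield1 subfieldM). Qed.

Lemma subfield_meval n (p : {mpoly K[n]}) (t : 'I_n -> K) :
  (forall m, F p@_m) -> (forall i, F (t i)) -> F p.@[t].
Proof.
move=> Fp Ft; rewrite mevalE; apply: subfield_sum => m _.
by apply: subfieldM => //; apply: subfield_prod => i _; apply: subfieldX.
Qed.

End Subfield.

Lemma whole_field_rc (K : rcfType) : is_real_closed_subfield (fun _ : K => True).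
Proof.
split=> [|p a b _ _ _ ab pab]; first by split.
by have [x xab px] := poly_ivt ab pab; exists x; rewrite ?xab.
Qed.

Section GeneratedSubfield.
Variable K : rcfType.

Lemma gen_field_subfield (E : K -> Prop) : is_subfield (gen_field E).
Proof.
split.
- by move=> F [].
- by move=> F [].
- by move=> x y Ex Ey F hF EF; apply: subfieldB (Ex F hF EF) (Ey F hF EF).
- by move=> x y Ex Ey F hF EF; apply: subfieldM (Ex F hF EF) (Ey F hF EF).
- by move=> x Ex x0 F hF EF; case: (hF) => _ _ _ _; apply => //; apply: Ex.
Qed.

Lemma gen_field_sub (E : K -> Prop) : subset_K E (gen_field E).
Proof. by move=> x Ex F _; apply. Qed.

End GeneratedSubfield.

Section RelativeAlgebraicClosure.
Variables (K : rcfType) (E : K -> Prop).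
Hypothesis hE : is_subfield E.

Definition subfield_pred : {pred K} := fun x => `[< E x >].

Lemma subfield_pred_divring : divring_closed subfield_pred.
Proof.
split; first exact/asboolP/(subfield1 hE).
  by move=> x y /asboolP Ex /asboolP Ey; apply/asboolP/(subfieldB hE).
move=> x y /asboolP Ex /asboolP Ey; apply/asboolP.
have [->|y0] := eqVneq y 0; first by rewrite invr0 mulr0; apply: subfield0.
by apply: subfieldM => //; case: hE => _ _ _ _; apply.
Qed.

HB.instance Definition _ := GRing.isDivringClosed.Build K subfield_pred
  subfield_pred_divring.

Inductive subfield_type := SubfieldElem x of x \in subfield_pred.
Definition subfield_val u := let: SubfieldElem x _ := u in x.
HB.instance Definition _ := [isSub for subfield_val].
HB.instance Definition _ := [Choice of subfield_type by <:].
HB.instance Definition _ := [SubChoice_isSubComUnitRing of subfield_type by <:].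
HB.instance Definition _ :=
  [SubComUnitRing_isSubIntegralDomain of subfield_type by <:].
HB.instance Definition _ := [SubIntegralDomain_isSubField of subfield_type by <:].

Let incl : {rmorphism subfield_type -> K} := val.

Lemma algebraic_overE x : algebraic_over E x <-> algebraicOver incl x.
Proof.
split=> [[p Ep [p0 px]]|[q q0 qx]]; last first.
  exists (map_poly incl q); last by rewrite map_poly_eq0.
  by move=> i; rewrite coef_map; apply/asboolP/(valP q`_i).
pose q := \poly_(i < size p) insubd (0 : subfield_type) p`_i.
have qp : map_poly incl q = p.
  apply/polyP => i; rewrite coef_map coef_poly /=.
  case: ltnP => [_|/(nth_default 0) ->]; last exact: (rmorph0 incl).
  by apply: insubdK; apply/asboolP.
by exists q; rewrite -?(map_poly_eq0 incl) qp.
Qed.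

Lemma algebraic_over_sub : subset_K E (algebraic_over E).
Proof.
move=> x Ex; apply/algebraic_overE.
have xE : x \in subfield_pred by apply/asboolP.
by rewrite -[x]/(incl (SubfieldElem xE)); apply: algebraic_id.
Qed.

Lemma algebraic_over_subfield : is_subfield (algebraic_over E).
Proof.
split.
- exact/algebraic_overE/algebraic0.
- exact/algebraic_overE/algebraic1.
- by move=> x y /algebraic_overE ? /algebraic_overE ?; apply/algebraic_overE/algebraic_sub.
- by move=> x y /algebraic_overE ? /algebraic_overE ?; apply/algebraic_overE/algebraic_mul.
- by move=> x /algebraic_overE ? _; apply/algebraic_overE/algebraic_inv.
Qed.

Lemma algebraic_over_real_closure : is_real_closure_of (algebraic_over E) E.
Proof.
split=> //; last exact: algebraic_over_sub.
split; first exact: algebraic_over_subfield.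
move=> p a b Ap Aa Ab ab pab.
have [x /andP[ax xb] rx] := poly_ivt ab pab.
have [->|p0] := eqVneq p 0; first by exists a; rewrite // lexx ab root0.
exists x; last by rewrite ax xb.
apply/algebraic_overE/integral_algebraic.
apply: (integral_root p0 rx) => z /(nthP 0) [i _ <-].
exact/integral_algebraic/algebraic_overE.
Qed.

End RelativeAlgebraicClosure.

Lemma meval_msym (K : rcfType) n (s : 'S_n) (t : 'I_n -> K) (p : {mpoly K[n]}) :
  (msym s p).@[t] = p.@[t \o s].
Proof.
rewrite /msym /mmap rmorph_sum mevalE; apply: eq_bigr => m _.
rewrite rmorphM /= mevalC /mmap1 rmorph_prod; congr (_ * _).
by apply: eq_bigr => i _; rewrite rmorphXn /= mevalXU.
Qed.

(** * Independent sets of cuts *)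

Section Independence.
Variable K : rcfType.
Implicit Types (F S : K -> Prop) (x : K).

Definition alg_indep F S :=
  forall n (t : 'I_n -> K), injective t -> (forall i, S (t i)) ->
    forall p : {mpoly K[n]}, (forall m, F p@_m) -> p.@[t] = 0 -> p = 0.

Definition between (c a b : K) := (a < c < b) \/ (b < c < a).

Definition cut_separated F S :=
  forall s s', S s -> S s' -> s <> s' -> exists2 c, F c & between c s s'.

Definition indep_realizers F S := cut_separated F S /\ alg_indep F S.

Definition mnm_init n (m : 'X_{1..n.+1}) : 'X_{1..n} :=
  [multinom m (widen_ord (leqnSn n) i) | i < n].

Lemma mnm_init_inj n (m1 m2 : 'X_{1..n.+1}) :
  m1 ord_max = m2 ord_max -> mnm_init m1 = mnm_init m2 -> m1 = m2.
Proof.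
move=> emax einit; apply/mnmP => i; case: (ltnP i n) => [lt_in|le_ni].
  have -> : i = widen_ord (leqnSn n) (Ordinal lt_in) by apply: val_inj.
  by have := congr1 (fun m : 'X_{1..n} => m (Ordinal lt_in)) einit; rewrite /mnm_init !mnmE.
by have -> : i = ord_max by apply/val_inj/anti_leq; rewrite le_ni -ltnS ltn_ord.
Qed.

(* Viewed as a polynomial in its last variable, [p] has coefficients [q k] in the
   other ones; once evaluated these lie in F(S) and form a polynomial vanishing
   at the transcendental [x], so every [q k] vanishes on [S]. *)
Lemma alg_indep_last F S x n (t : 'I_n.+1 -> K) (p : {mpoly K[n.+1]}) :
  is_subfield F -> alg_indep F S ->
  ~ algebraic_over (gen_field (fun y => F y \/ S y)) x -> t ord_max = x ->
  injective (t \o widen_ord (leqnSn n)) ->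
  (forall i, S (t (widen_ord (leqnSn n) i))) ->
  (forall m, F p@_m) -> p.@[t] = 0 -> p = 0.
Proof.
move=> hF indS xtr tx tinj tS Fp pt0.
pose G := gen_field (fun y => F y \/ S y).
pose tw := t \o widen_ord (leqnSn n).
pose q k : {mpoly K[n]} :=
  \sum_(m <- msupp p | m ord_max == k) p@_m *: 'X_[mnm_init m].
pose P : {poly K} :=
  \sum_(m <- msupp p) (p@_m * \prod_(i < n) tw i ^+ mnm_init m i) *: 'X^(m ord_max).
have Pk k : P`_k = (q k).@[tw].
  rewrite /P /q coef_sum rmorph_sum /= [RHS]big_mkcond /=; apply: eq_bigr => m _.
  rewrite coefZ coefXn; case: (m ord_max =P k) => [<-|ne].
    by rewrite eqxx mulr1 mevalZ mevalX.
  by rewrite (_ : (k == _) = false) ?mulr0 //; apply/eqP => e; apply: ne.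
have Px : P.[x] = p.@[t].
  rewrite /P horner_sum mevalE; apply: eq_bigr => m _.
  rewrite hornerZ hornerXn big_ord_recr /= -tx -mulrA; congr (_ * (_ * _)).
  by apply: eq_bigr => i _; rewrite /mnm_init mnmE.
have Fq k m : F (q k)@_m.
  rewrite /q raddf_sum /=; apply: subfield_sum => // m' _.
  by rewrite mcoeffZ mcoeffX; apply: subfieldM => //; apply: subfield_nat.
have GP k : G P`_k.
  rewrite Pk; apply: subfield_meval; first exact: gen_field_subfield.
    by move=> m; apply: gen_field_sub; left; apply: Fq.
  by move=> i; apply: gen_field_sub; right; apply: tS.
have P0 : P = 0.
  by apply: contrapT => /eqP P0; apply: xtr; exists P => //; rewrite /root Px pt0.
have q0 k : q k = 0 by apply: (indS _ tw) => //; rewrite -Pk P0 coef0.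
apply/mpolyP => m; rewrite mcoeff0.
have <- : (q (m ord_max))@_(mnm_init m) = p@_m; last by rewrite q0 mcoeff0.
rewrite /q raddf_sum /= [in RHS](mpolyE p) raddf_sum /= big_mkcond /=.
apply: eq_bigr => m' _; rewrite !mcoeffZ !mcoeffX.
case: (eqVneq m' m) => [->|ne]; first by rewrite !eqxx.
rewrite mulr0; case: eqP => // em; case: eqP => [ei|]; last by rewrite mulr0.
by case/eqP: ne; apply: mnm_init_inj.
Qed.

Lemma alg_indepU1 F S x : is_subfield F -> alg_indep F S ->
  ~ algebraic_over (gen_field (fun y => F y \/ S y)) x ->
  alg_indep F (fun y => S y \/ y = x).
Proof.
move=> hF indS xtr n t tinj tS p Fp pt0.
case: (pselect (exists j, t j = x)) => [[j tj]|nx]; last first.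
  by apply: (indS _ t) => // i; case: (tS i) => // ti; case: nx; exists i.
case: n j t tinj tS p Fp pt0 tj => [[]//|n] j t tinj tS p Fp pt0 tj.
(* Swap the variable evaluated at [x] into the last position. *)
pose s := tperm j ord_max.
have ts : (t \o s) \o s = t by apply: funext => i; rewrite /= tpermK.
have Fps m : F (msym s p)@_m by rewrite mcoeff_sym.
have wS i : S (t (s (widen_ord (leqnSn n) i))).
  case: (tS (s (widen_ord (leqnSn n) i))) => // e.
  have : s (widen_ord (leqnSn n) i) = j by apply: tinj; rewrite e tj.
  move/(congr1 s); rewrite tpermK tpermL => /(congr1 val) /= ei.
  by move: (ltn_ord i); rewrite ei ltnn.
have tsmax : (t \o s) ord_max = x by rewrite /= tpermR.
have tsinj : injective ((t \o s) \o widen_ord (leqnSn n)).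
  by move=> i1 i2 /tinj /perm_inj /(congr1 val) /= ei; apply: val_inj.
have ps0 : (msym s p).@[t \o s] = 0 by rewrite meval_msym ts.
move: (alg_indep_last hF indS xtr tsmax tsinj wS Fps ps0) => /(congr1 (msym s)).
by rewrite -msymMm tperm2 msym1m msym0.
Qed.

Lemma alg_indep_disjoint F S s : is_subfield F -> alg_indep F S -> S s -> ~ F s.
Proof.
move=> hF indS Ss Fs; pose p : {mpoly K[1]} := 'X_ord0 - s%:MP.
have Fp m : F p@_m.
  rewrite mcoeffB mcoeffX mcoeffC.
  by apply: subfieldB => //; [apply: subfield_nat|apply: subfieldM => //; apply: subfield_nat].
have p0 : p.@[fun _ => s] = 0 by rewrite mevalB mevalXU mevalC subrr.
have sinj : injective (fun _ : 'I_1 => s) by move=> i j _; rewrite !ord1.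
have /(congr1 (mcoeff U_(ord0)%MM)) := indS 1 _ sinj (fun=> Ss) p Fp p0.
rewrite mcoeffB mcoeffX mcoeffC eqxx mnm1_eq0 mulr0 subr0 mcoeff0.
by move/eqP; rewrite oner_eq0.
Qed.

Lemma indep_realizersU1 F S x : is_subfield F -> indep_realizers F S ->
  ~ algebraic_over (gen_field (fun y => F y \/ S y)) x ->
  (forall s, S s -> exists2 c, F c & between c s x) ->
  indep_realizers F (fun y => S y \/ y = x).
Proof.
move=> hF [sepS indS] xtr sepx; split; last exact: alg_indepU1.
move=> a b [Sa|->] [Sb|->] ab.
- exact: sepS.
- exact: sepx.
- by have [c Fc bc] := sepx _ Sb; exists c => //; case: bc; [right|left].
- by case: ab.
Qed.

Definition cut_of F x : cutT K := (fun c => F c /\ c < x, fun c => F c /\ x < c).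

Lemma indep_realizers_cuts F S : is_subfield F -> indep_realizers F S ->
  realizes_indep_cuts F S.
Proof.
move=> hF [sepS indS]; have disj s : S s -> ~ F s := alg_indep_disjoint hF indS.
pose Cs C := exists2 s, S s & C = cut_of F s.
exists Cs; split.
- split.
    move=> C [s Ss ->]; split => /=.
    + move=> x; split; last by case=> -[].
      move=> Fx; case: (ltgtP x s) => [xs|sx|xs]; [left|right|] => //.
      by case: (disj s Ss); rewrite -xs.
    + by move=> x [[_ xs] [_ sx]]; move: (lt_trans xs sx); rewrite ltxx.
    + by move=> x y [_ xs] [_ sy]; apply: lt_trans sy.
  move=> dep; pose a C := if pselect (exists s, S s /\ C = cut_of F s) is left h
    then sval (cid h) else 0.
  have aP C : Cs C -> S (a C) /\ C = cut_of F (a C).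
    move=> [s Ss eC]; rewrite /a; case: pselect => [h|[]]; last by exists s.
    by case: (cid h).
  have emb : ofield_emb F (@id K) by split.
  have real_a C : Cs C -> realizes_in F id C (a C).
    by move=> /aP [_ {1}->].
  have [n [cs [csC [csinj [p [p0 Fp pa]]]]]] := dep K id emb a real_a.
  move/eqP: p0; apply; apply: (indS n (a \o cs)) pa => // [i j /= aij|i].
    by apply: csinj; rewrite (aP _ (csC i)).2 (aP _ (csC j)).2 aij.
  by case: (aP _ (csC i)).
- by move=> s Ss; exists (cut_of F s) => //; exists s.
- by move=> C [s Ss ->]; exists s.
- move=> C s s' [s0 _ ->] Ss Ss' [h1 h2] [h1' h2'].
  apply: contrapT => ss'; have [c Fc] := sepS _ _ Ss Ss' ss'.
  case=> /andP[lt1 lt2].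
  + have [[_ s0c] [_ cs0]] := ((h2 c).2 (conj Fc lt1), (h1' c).2 (conj Fc lt2)).
    by move: (lt_trans s0c cs0); rewrite ltxx.
  + have [[_ s0c] [_ cs0]] := ((h2' c).2 (conj Fc lt1), (h1 c).2 (conj Fc lt2)).
    by move: (lt_trans s0c cs0); rewrite ltxx.
Qed.

End Independence.

Lemma chain_cover_seq (T : eqType) (Fam : (T -> Prop) -> Prop) (l : seq T) :
  (forall X Y, Fam X -> Fam Y -> (forall y, X y -> Y y) \/ (forall y, Y y -> X y)) ->
  (exists X, Fam X) -> (forall y, y \in l -> exists2 X, Fam X & X y) ->
  exists2 X, Fam X & forall y, y \in l -> X y.
Proof.
move=> tot [X0 FX0]; elim: l => [|a l ih] cover; first by exists X0.
have [Xa FXa Xa_a] := cover a (mem_head _ _).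
have [Xl FXl Xl_l] := ih (fun y yl => cover y (@mem_behead _ (a :: l) y yl)).
case: (tot _ _ FXa FXl) => sub.
  by exists Xl => // y; rewrite inE => /orP[/eqP ->|/Xl_l//]; apply: sub.
by exists Xa => // y; rewrite inE => /orP[/eqP ->//|/Xl_l]; apply: sub.
Qed.

Section Chains.
Variable K : rcfType.
Variable Fam : (K -> Prop) -> Prop.
Hypothesis Fam_total :
  forall X Y, Fam X -> Fam Y -> subset_K X Y \/ subset_K Y X.

Local Notation union := (fun y => exists2 X, Fam X & X y).

Lemma indep_realizers_chain (F : K -> Prop) :
  (forall X, Fam X -> indep_realizers F X) -> indep_realizers F union.
Proof.
move=> indFam; split.
  move=> a b [Xa FXa Xa_a] [Xb FXb Xb_b] ab.
  case: (Fam_total FXa FXb) => sub.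
    by apply: (proj1 (indFam _ FXb)) => //; apply: sub.
  by apply: (proj1 (indFam _ FXa)) => //; apply: sub.
case=> [|n] t tinj tS p Fp pt0; first by move: pt0; rewrite [p]nvar0_mpolyC mevalC => ->.
have [X FX Xt] : exists2 X, Fam X & forall y, y \in [seq t i | i <- enum 'I_n.+1] -> X y.
  apply: chain_cover_seq => //; first by case: (tS ord0) => X FX _; exists X.
  by move=> y /mapP [i _ ->]; apply: tS.
apply: (proj2 (indFam _ FX) _ t) => // i; apply: Xt.
by apply/mapP; exists i; rewrite ?mem_enum.
Qed.

Lemma real_closed_chain : (exists X, Fam X) ->
  (forall X, Fam X -> is_real_closed_subfield X) -> is_real_closed_subfield union.
Proof.
move=> Fam0 rcFam.
have cover (l : seq K) : (forall y, y \in l -> union y) ->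
    exists2 X, Fam X & forall y, y \in l -> X y.
  exact: chain_cover_seq.
have cover2 x y : union x -> union y -> exists2 X, Fam X & X x /\ X y.
  move=> ux uy; have [X FX Xxy] : exists2 X, Fam X & forall z, z \in [:: x; y] -> X z.
    by apply: cover => z; rewrite !inE => /orP[] /eqP ->.
  by exists X => //; split; apply: Xxy; rewrite !inE eqxx ?orbT.
have [X0 FX0] := Fam0; have [[X0_0 X0_1 _ _ _] _] := rcFam _ FX0.
split; first split.
- by exists X0.
- by exists X0.
- move=> x y ux uy; have [X FX [Xx Xy]] := cover2 x y ux uy.
  by exists X => //; case: (rcFam _ FX) => hX _; apply: subfieldB.
- move=> x y ux uy; have [X FX [Xx Xy]] := cover2 x y ux uy.
  by exists X => //; case: (rcFam _ FX) => hX _; apply: subfieldM.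
- move=> x [X FX Xx] x0; exists X => //.
  by case: (rcFam _ FX) => -[_ _ _ _ XV] _; apply: XV.
move=> p a b up ua ub ab pab.
have [X FX Xl] : exists2 X, Fam X & forall z, z \in a :: b :: (p : seq K) -> X z.
  apply: cover => z; rewrite !inE => /orP[/eqP ->//|/orP[/eqP ->//|/(nthP 0) [i _ <-]]].
  exact: up.
have [[X_0 _ _ _ _] ivt] := rcFam _ FX.
have Xp : poly_over X p.
  move=> i; case: (ltnP i (size p)) => [lt|ge]; last by rewrite nth_default.
  by apply: Xl; rewrite !inE mem_nth ?orbT.
have Xb : X b by apply: Xl; rewrite !inE eqxx orbT.
have [x Xx xab] := ivt p a b Xp (Xl a (mem_head _ _)) Xb ab pab.
by exists x => //; exists X.
Qed.

End Chains.

Section NextField.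
Variable K : rcfType.
Implicit Types (F S : K -> Prop) (x : K).

Lemma exists_max_realizers F : exists S, indep_realizers F S /\
  forall S', subset_K S S' -> ~ subset_K S' S -> ~ indep_realizers F S'.
Proof.
have [Fam FamI Famtot|S [indS Smax]] := @classical_sets.Zorn_bigcup K (indep_realizers F).
  exact: indep_realizers_chain.
by exists S; split => // S' SS' S'S indS'; apply: (Smax S').
Qed.

Definition max_realizers F : K -> Prop := sval (cid (exists_max_realizers F)).

Lemma max_realizers_indep F : indep_realizers F (max_realizers F).
Proof. exact: (svalP (cid (exists_max_realizers F))).1. Qed.

Lemma max_realizers_max F S : subset_K (max_realizers F) S ->
  ~ subset_K S (max_realizers F) -> ~ indep_realizers F S.
Proof. exact: (svalP (cid (exists_max_realizers F))).2. Qed.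

Definition adjoin_realizers F := gen_field (fun y => F y \/ max_realizers F y).

Definition next_field F : K -> Prop := algebraic_over (adjoin_realizers F).

Lemma next_field_closure F : is_real_closure_of (next_field F) (adjoin_realizers F).
Proof. exact/algebraic_over_real_closure/gen_field_subfield. Qed.

Lemma next_field_rc F : is_real_closed_subfield (next_field F).
Proof. by case: (next_field_closure F). Qed.

Lemma next_field_sub F : subset_K F (next_field F).
Proof.
move=> x Fx; apply: algebraic_over_sub; first exact: gen_field_subfield.
by apply: gen_field_sub; left.
Qed.

Lemma max_realizers_next F : subset_K (max_realizers F) (next_field F).
Proof.
move=> x Sx; apply: algebraic_over_sub; first exact: gen_field_subfield.
by apply: gen_field_sub; right.
Qed.

Lemma max_realizers_disjoint F s : is_subfield F -> max_realizers F s -> ~ F s.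
Proof. by move=> hF; apply: alg_indep_disjoint hF (max_realizers_indep F).2. Qed.

(* Otherwise [x] could be added to the maximal set of realizers. *)
Lemma next_field_gap F x : is_subfield F -> ~ next_field F x ->
  exists s, [/\ max_realizers F s, s <> x & forall c, F c -> ~ between c s x].
Proof.
move=> hF xF; apply: contrapT => nogap.
have xS : ~ max_realizers F x by move/max_realizers_next.
have sepx s : max_realizers F s -> exists2 c, F c & between c s x.
  move=> Ss; apply: contrapT => nsep; apply: nogap; exists s; split => //.
    by move=> sx; apply: xS; rewrite -sx.
  by move=> c Fc bc; apply: nsep; exists c.
apply: (@max_realizers_max F (fun y => max_realizers F y \/ y = x)).
- by move=> y Sy; left.
- by move/(_ x (or_intror erefl)).
- exact: indep_realizersU1 (max_realizers_indep F) xF sepx.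
Qed.

End NextField.

(** * The height chain *)

Section RealAlgebraic.
Variable K : rcfType.
Implicit Type x : K.

Definition real_algebraic : K -> Prop := algebraic_over (gen_field (fun=> False)).

Lemma real_algebraic_rc : is_real_closed_subfield real_algebraic.
Proof. by case: (algebraic_over_real_closure (gen_field_subfield (fun _ : K => False))). Qed.

Lemma prime_subfield_rat x : gen_field (fun=> False) x -> exists q : rat, x = ratr q.
Proof.
move=> gx; apply: (gx (fun y => exists q : rat, y = ratr q)) => //; split.
- by exists 0; rewrite rmorph0.
- by exists 1; rewrite rmorph1.
- by move=> _ _ [q ->] [r ->]; exists (q - r); rewrite rmorphB.
- by move=> _ _ [q ->] [r ->]; exists (q * r); rewrite rmorphM.
- by move=> _ [q ->] _; exists q^-1; rewrite fmorphV.
Qed.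

Lemma real_algebraic_rat_root x : real_algebraic x ->
  exists r : {poly rat}, r != 0 /\ root (map_poly ratr r) x.
Proof.
case=> p Qp [p0 px].
have Qpi i : exists q : rat, p`_i = ratr q by apply: prime_subfield_rat.
pose r := \poly_(i < size p) sval (cid (Qpi i)).
have rp : map_poly ratr r = p.
  apply/polyP => i; rewrite coef_map coef_poly.
  case: ltnP => [_|/(nth_default 0) ->]; last exact: (rmorph0 ratr).
  by case: cid.
by exists r; rewrite -(map_poly_eq0 (ratr : {rmorphism rat -> K})) rp.
Qed.

Lemma real_algebraic_countable : exists g : K -> nat,
  forall x y, real_algebraic x -> real_algebraic y -> g x = g y -> x = y.
Proof.
pose r x := if pselect (exists r : {poly rat}, r != 0 /\ root (map_poly ratr r) x)
  is left h then sval (cid h) else 0.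
have rP x : real_algebraic x -> x \in rootsR (map_poly ratr (r x)).
  move=> /real_algebraic_rat_root h; rewrite /r; case: pselect => // {}h.
  by case: cid => q [q0 qx]; rewrite -roots_on_rootsR ?map_poly_eq0 ?qx.
exists (fun x => pickle (r x, index x (rootsR (map_poly ratr (r x))))).
move=> x y Ax Ay /(pcan_inj pickleK_inv) [rxy ixy].
by rewrite -(nth_index 0 (rP x Ax)) -(nth_index 0 (rP y Ay)) ixy rxy.
Qed.

End RealAlgebraic.
Arguments real_algebraic {K}.

Section RegularDepth.
Variables (K : rcfType) (T : Type) (R : T -> T -> Prop).
Hypotheses (regR : is_regular_cardinal R) (bndR : bounds_increasing_seqs K R).

Lemma regular_wo : strict_wellorder R.
Proof. by case: regR => -[]. Qed.

Lemma regular_no_max a : exists b, R a b.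
Proof.
have [_ [f finj] cofR] := regR; apply: contrapT => amax.
have [|g [mono _]] := cofR (fun y => y = a).
  move=> k; exists a => //.
  by case: (swo_total regular_wo k a) => [|->|ak]; [left|right|case: amax; exists k].
have f01 : f 0%N <> f 1%N by move/finj.
have ga y : sval (g y) = a := svalP (g y).
case: (swo_total regular_wo (f 0%N) (f 1%N)) => [lt|//|lt];
  by have := mono _ _ lt; rewrite /sub_rel !ga => /(swo_irr regular_wo).
Qed.

Lemma no_cofinal_increasing (C : T -> Prop) (s : T -> K) : cofinal R C ->
  ~ (forall u v, C u -> C v -> R u v -> s u < s v).
Proof.
move=> cofC incr; have [_ _ cofR] := regR; have [g [mono _]] := cofR C cofC.
apply: (ord_lt_irr regular_wo); apply: (bndR (s := s \o sval \o g) regular_wo).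
by move=> u v uv; apply: incr (mono _ _ uv); apply: svalP.
Qed.

End RegularDepth.

Section HeightChain.
Variables (K : rcfType) (T : Type) (R : T -> T -> Prop).
Hypotheses (regR : is_regular_cardinal R) (bndR : bounds_increasing_seqs K R).

Let wR := regular_wo regR.

Definition Knext : T -> K -> Prop :=
  Fix (swo_wf wR) (fun _ => K -> Prop) (fun i rec =>
    next_field (fun x => real_algebraic x \/ exists j (h : R j i), rec j h x)).

Definition Kstage (i : T) (x : K) : Prop :=
  real_algebraic x \/ exists2 j, R j i & Knext j x.

Lemma KnextE i : Knext i = next_field (Kstage i).
Proof.
rewrite /Knext Fix_eq; last first.
  move=> j f g fg; congr next_field; apply: funext => y; apply: propext.
  by split=> -[?|[k [h ky]]]; [left|right; exists k, h; rewrite -fg|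
                                 left|right; exists k, h; rewrite fg].
congr next_field; apply: funext => y; apply: propext; split.
- by case=> [?|[k [h ky]]]; [left|right; exists k].
- by case=> [?|[k h ky]]; [left|right; exists k, h].
Qed.

Lemma Kstage_next i : subset_K (Kstage i) (Knext i).
Proof. by rewrite KnextE; apply: next_field_sub. Qed.

Lemma Knext_stage i j : R i j -> subset_K (Knext i) (Kstage j).
Proof. by move=> ij x ix; right; exists i. Qed.

Lemma Kstage_mono i j : R i j -> subset_K (Kstage i) (Kstage j).
Proof. by move=> ij x /Kstage_next; apply: Knext_stage. Qed.

Lemma Kstage_rc i : is_real_closed_subfield (Kstage i).
Proof.
pose Fam (X : K -> Prop) := X = real_algebraic \/ exists2 j, R j i & X = Knext j.
have -> : Kstage i = (fun y => exists2 X, Fam X & X y).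
  apply: funext => y; apply: propext; split.
    case=> [Ay|[j ji jy]]; first by exists real_algebraic => //; left.
    by exists (Knext j) => //; right; exists j.
  by case=> X [->|[j ji ->]] Xy; [left|right; exists j].
have A_next j : subset_K real_algebraic (Knext j) by move=> x Ax; apply: Kstage_next; left.
apply: real_closed_chain.
- move=> X Y [->|[j _ ->]] [->|[k _ ->]]; try by [left|left; apply: A_next|right; apply: A_next].
  case: (swo_total wR j k) => [jk|->|kj]; [left|left|right] => // x.
    by move/(Knext_stage jk)/Kstage_next.
  by move/(Knext_stage kj)/Kstage_next.
- by exists real_algebraic; left.
- move=> X [->|[j _ ->]]; first exact: real_algebraic_rc.
  by rewrite KnextE; apply: next_field_rc.
Qed.

Lemma Kstage_subfield i : is_subfield (Kstage i).
Proof. by case: (Kstage_rc i). Qed.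

Lemma Kstage_succ i j : R i j -> (forall k, ~ (R i k /\ R k j)) ->
  Kstage j = next_field (Kstage i).
Proof.
move=> ij ij_next; rewrite -KnextE; apply: funext => x; apply: propext; split.
  case=> [Ax|[k kj kx]]; first by apply: Kstage_next; left.
  case: (swo_total wR k i) => [ki|<-//|ik]; last by case: (ij_next k).
  exact/Kstage_next/(Knext_stage ki).
exact: Knext_stage.
Qed.

Lemma Kstage_limit i : (exists j, R j i) -> (forall j, R j i -> exists2 k, R j k & R k i) ->
  forall x, Kstage i x <-> exists2 j, R j i & Kstage j x.
Proof.
move=> [j0 j0i] lim x; split; last by case=> j ji; apply: Kstage_mono.
case=> [Ax|[j ji jx]]; first by exists j0 => //; left.
by have [k jk ki] := lim j ji; exists k => //; apply: Knext_stage jk _ jx.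
Qed.

Lemma gap_witnesses_monotone x (w : T -> K) :
  (forall i, max_realizers (Kstage i) (w i)) ->
  (forall i c, Kstage i c -> ~ between c (w i) x) ->
  forall i j, R i j ->
    (w i < x -> w j < x -> w i < w j) /\ (x < w i -> x < w j -> w j < w i).
Proof.
move=> wS wgap i j ij.
have wij : Kstage j (w i).
  by apply: (Knext_stage ij); rewrite KnextE; apply: max_realizers_next.
have wji : w j != w i.
  by apply/eqP => e; have := max_realizers_disjoint (Kstage_subfield j) (wS j); rewrite e.
split=> [ix jx|xi xj]; case: ltgtP wji => // ji _; exfalso; apply: (wgap j _ wij).
- by left; rewrite ji ix.
- by right; rewrite ji xi.
Qed.

Lemma Kstage_exhaust x : exists i, Kstage i x.
Proof.
apply: contrapT => xnot.
have gap i : exists s, [/\ max_realizers (Kstage i) s, s <> x &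
    forall c, Kstage i c -> ~ between c s x].
  apply: next_field_gap (Kstage_subfield i) _ => xi.
  have [j ij] := regular_no_max regR i; apply: xnot; exists j.
  by apply: (Knext_stage ij); rewrite KnextE.
pose w i := sval (cid (gap i)).
have wP i : [/\ max_realizers (Kstage i) (w i), w i <> x &
    forall c, Kstage i c -> ~ between c (w i) x].
  exact: svalP (cid (gap i)).
have wS i : max_realizers (Kstage i) (w i) by case: (wP i).
have wgap i c : Kstage i c -> ~ between c (w i) x by case: (wP i) => _ _; apply.
have mono := gap_witnesses_monotone wS wgap.
have side i : ~ w i < x -> x < w i by case: (ltgtP (w i) x) => // e _; case: (wP i).
case: (cofinalVcompl (fun i => w i < x) wR) => cof.
  apply: (no_cofinal_increasing regR bndR (s := w) cof) => u v ux vx uv.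
  exact: (mono u v uv).1.
apply: (no_cofinal_increasing regR bndR (s := fun i => - w i) cof) => u v xu xv uv.
by rewrite ltrN2; apply: (mono u v uv).2; apply: side.
Qed.


Definition chain_field (o : option T) : K -> Prop :=
  if o is Some i then Kstage i else fun=> True.

Definition chain_realizers (o : option T) : K -> Prop :=
  if o is Some i then max_realizers (Kstage i) else fun=> False.

Lemma height_chain_stages : height_chain (with_top R) None chain_field chain_realizers.
Proof.
have [_ [f _] _] := regR.
split.
- exact: with_top_wo.
- by move=> [i|]; [left|right].
- by move=> [i|]; [apply: Kstage_rc|apply: whole_field_rc].
- by move=> [i|] [j|] //= ij x; apply: Kstage_mono.
split.
- move=> [i0|] i0min; last by case: (i0min (Some (f 0%N))).
  have [g ginj] := @real_algebraic_countable K; exists g => x y ix iy; apply: ginj.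
  + by case: ix => // -[j ji _]; case: (i0min (Some j)).
  + by case: iy => // -[j ji _]; case: (i0min (Some j)).
- move=> [a|] [j ji] lim x; last first.
    by split=> // _; have [i ix] := Kstage_exhaust x; exists (Some i).
  have lim' b : R b a -> exists2 k, R b k & R k a.
    by move=> ba; have [[k|] bk ka] := lim (Some b) ba; [exists k|].
  case: j ji => [b|] // ba; rewrite /= (Kstage_limit (ex_intro _ b ba) lim' x).
  by split=> [[k ka kx]|[[k|] // ka kx]]; [exists (Some k)|exists k].
- move=> [i|] [j|] // ij ij_next; last first.
    by have [k ik] := regular_no_max regR i; case: (ij_next (Some k)).
  rewrite /= (Kstage_succ ij) => [|k [ik kj]]; last exact: (ij_next (Some k)).
  split; first exact: max_realizers_next.
    exact: indep_realizers_cuts (Kstage_subfield i) (max_realizers_indep _).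
  exact: next_field_closure.
- by [].
Qed.

End HeightChain.

Theorem lemma3p3 (K : rcfType) :
  (exists (T : Type) (Rk : T -> T -> Prop), is_depth K Rk) /\
  (forall (T : Type) (Rk : T -> T -> Prop), is_depth K Rk ->
    exists (I : Type) (R : I -> I -> Prop) (top : I) (Kc S : I -> K -> Prop),
      height_chain R top Kc S /\
      ord_le (sub_rel R (fun i => R i top)) Rk).
Proof.
split; first exact: depth_exists.
move=> T Rk [regT bndT _].
exists (option T), (with_top Rk), None, (chain_field regT), (chain_realizers regT).
split; first exact: height_chain_stages.
exact: ord_iso_le (with_top_iso Rk).
Qed.
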